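(* Let $\Gamma$ be an angled $G$-graph such that for each subgroup $K\le G$, every regular $K$-section of $\Gamma$ has curvature $\le\alpha$, where $\alpha\le0$. Suppose $H$ is a subgroup of $G$ and $\Delta$ is a non-empty spurless $H$-section of $\Gamma$. Then: (1) if $\Delta$ contains an edge, $\kappa(H,\Delta)\le\alpha$; (2) $\kappa(H,\Delta)>0$ if and only if $\Delta$ is a single vertex and $H$ is a finite group.
   Context: An angled $G$-graph is a graph with a $G$-action and a $G$-invariant map $\measuredangle$ from edges to $\mathbb R$. For a group $K$, $|K|^{-1}=1/|K|$ if $K$ finite, else $0$. For a graph $\Delta$ with a $K$-action and finitely many $K$-orbits of cells, $\kappa(K,\Delta)=2\pi|K|^{-1}-\sum_v\pi|K_v|^{-1}+\sum_e(\pi-\measuredangle(e))|K_e|^{-1}$ (sums over orbit representatives of vertices and edges; $K_v,K_e$ stabilizers in $K$); this is the curvature of $\Delta$. For $H\le G$, an $H$-section of $\Gamma$ is an $H$-invariant subgraph with finitely many $H$-orbits of cells; it is spurless if it has no vertex of valence one, and regular if it is spurless, connected, and has at least one edge. *)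

From Stdlib Require Import Reals List Relations ClassicalEpsilon ClassicalDescription.
Import ListNotations.
Open Scope R_scope.

Record Group := {
  gcar :> Type;
  gmul : gcar -> gcar -> gcar;
  gone : gcar;
  ginv : gcar -> gcar;
  gmulA : forall x y z, gmul x (gmul y z) = gmul (gmul x y) z;
  gmul1 : forall x, gmul gone x = x;
  gmulV : forall x, gmul (ginv x) x = gone
}.

Definition subgroup (G : Group) (K : G -> Prop) : Prop :=
  K (gone G) /\ (forall x y, K x -> K y -> K (gmul G x y)) /\
  (forall x, K x -> K (ginv G x)).

(** Angled G-graphs: vertices V, (geometric) edges E with two endpoints
   (loops and multiple edges allowed), a G-action on vertices and edges
   preserving incidence (possibly inverting edges), and a G-invariant
   angle map from edges to R. *)
Record angled_graph (G : Group) := {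
  V : Type;
  E : Type;
  src : E -> V;
  tgt : E -> V;
  actV : G -> V -> V;
  actE : G -> E -> E;
  actV1 : forall v, actV (gone G) v = v;
  actVM : forall g h v, actV (gmul G g h) v = actV g (actV h v);
  actE1 : forall e, actE (gone G) e = e;
  actEM : forall g h e, actE (gmul G g h) e = actE g (actE h e);
  act_incid : forall g e,
    (src (actE g e) = actV g (src e) /\ tgt (actE g e) = actV g (tgt e)) \/
    (src (actE g e) = actV g (tgt e) /\ tgt (actE g e) = actV g (src e));
  angle : E -> R;
  angle_inv : forall g e, angle (actE g e) = angle e
}.

Arguments V {G}. Arguments E {G}. Arguments src {G}. Arguments tgt {G}.
Arguments actV {G}. Arguments actE {G}. Arguments angle {G}.

(** |A|^{-1}: 1/|A| if A is finite, 0 otherwise. *)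
Definition fin_enum {T : Type} (A : T -> Prop) (l : list T) : Prop :=
  NoDup l /\ forall x, A x <-> In x l.

Definition inv_card {T : Type} (A : T -> Prop) : R :=
  if excluded_middle_informative (exists l, fin_enum A l)
  then / INR (length (epsilon (inhabits (@nil T)) (fin_enum A)))
  else 0.

Definition group_finite (G : Group) (K : G -> Prop) : Prop :=
  exists l, fin_enum K l.

Definition stabV {G} (Γ : angled_graph G) (K : G -> Prop) (v : V Γ) : G -> Prop :=
  fun k => K k /\ actV Γ k v = v.
Definition stabE {G} (Γ : angled_graph G) (K : G -> Prop) (e : E Γ) : G -> Prop :=
  fun k => K k /\ actE Γ k e = e.

Definition transversal {G : Group} {T : Type} (act : G -> T -> T)
    (K : G -> Prop) (D : T -> Prop) (l : list T) : Prop :=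
  NoDup l /\ (forall x, In x l -> D x) /\
  (forall x, D x -> exists y k, In y l /\ K k /\ act k y = x) /\
  (forall x y k, In x l -> In y l -> K k -> act k x = y -> x = y).

Definition sumR {T : Type} (f : T -> R) (l : list T) : R :=
  fold_right Rplus 0 (map f l).

(** Curvature kappa(K, Delta), Delta = (DV, DE), computed from a chosen
   system of orbit representatives (the value is independent of the choice). *)
Definition kappa {G} (Γ : angled_graph G) (K : G -> Prop)
    (DV : V Γ -> Prop) (DE : E Γ -> Prop) : R :=
  let reps := epsilon (inhabits (@nil (V Γ), @nil (E Γ)))
      (fun p => transversal (actV Γ) K DV (fst p) /\
                transversal (actE Γ) K DE (snd p)) in
  2 * PI * inv_card K
  - sumR (fun v => PI * inv_card (stabV Γ K v)) (fst reps)
  + sumR (fun e => (PI - angle Γ e) * inv_card (stabE Γ K e)) (snd reps).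

Definition subgraph {G} (Γ : angled_graph G) (DV : V Γ -> Prop) (DE : E Γ -> Prop) :=
  forall e, DE e -> DV (src Γ e) /\ DV (tgt Γ e).

Definition invariant {G} (Γ : angled_graph G) (K : G -> Prop)
    (DV : V Γ -> Prop) (DE : E Γ -> Prop) :=
  (forall k v, K k -> DV v -> DV (actV Γ k v)) /\
  (forall k e, K k -> DE e -> DE (actE Γ k e)).

Definition finitely_many_orbits {G} (Γ : angled_graph G) (K : G -> Prop)
    (DV : V Γ -> Prop) (DE : E Γ -> Prop) :=
  (exists l, forall v, DV v -> exists y k, In y l /\ K k /\ actV Γ k y = v) /\
  (exists l, forall e, DE e -> exists y k, In y l /\ K k /\ actE Γ k y = e).

Definition section {G} (Γ : angled_graph G) (K : G -> Prop)
    (DV : V Γ -> Prop) (DE : E Γ -> Prop) :=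
  subgraph Γ DV DE /\ invariant Γ K DV DE /\ finitely_many_orbits Γ K DV DE.

Definition endpt {G} (Γ : angled_graph G) (e : E Γ) (b : bool) : V Γ :=
  if b then src Γ e else tgt Γ e.

(** v has valence one in (DV,DE): exactly one edge-end of DE at v
   (a loop contributes two ends). *)
Definition valence_one {G} (Γ : angled_graph G) (DE : E Γ -> Prop) (v : V Γ) :=
  exists e b, DE e /\ endpt Γ e b = v /\
    forall e' b', DE e' -> endpt Γ e' b' = v -> e' = e /\ b' = b.

Definition spurless {G} (Γ : angled_graph G) (DV : V Γ -> Prop) (DE : E Γ -> Prop) :=
  forall v, DV v -> ~ valence_one Γ DE v.

Definition adj {G} (Γ : angled_graph G) (DE : E Γ -> Prop) : relation (V Γ) :=
  fun u w => exists e, DE e /\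
    ((src Γ e = u /\ tgt Γ e = w) \/ (src Γ e = w /\ tgt Γ e = u)).

Definition connected {G} (Γ : angled_graph G) (DV : V Γ -> Prop) (DE : E Γ -> Prop) :=
  forall u w, DV u -> DV w -> clos_refl_trans (V Γ) (adj Γ DE) u w.

Definition regular_section {G} (Γ : angled_graph G) (K : G -> Prop)
    (DV : V Γ -> Prop) (DE : E Γ -> Prop) :=
  section Γ K DV DE /\ spurless Γ DV DE /\ connected Γ DV DE /\ exists e, DE e.

From Stdlib Require Import Reals Lra Lia List Permutation Relations
  ClassicalEpsilon ClassicalDescription Classical.
Import ListNotations.
Open Scope R_scope.

(* Split Δ along the H-orbit of one connected component C, with stabilizer H_C. Counting orbit
   representatives gives
     κ(H,Δ) - 2π|H|⁻¹ = (κ(H_C,C) - 2π|H_C|⁻¹) + (κ(H,Δ') - 2π|H|⁻¹),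
   where Δ' is Δ without the orbit of C, again a spurless H-section. A component with an edge is a
   regular H_C-section, so its term is at most α ≤ 0; an edgeless component is a single vertex u,
   whose term is -π|H_u|⁻¹ ≤ 0. Induction on the number of vertex orbits gives κ(H,Δ) ≤ 2π|H|⁻¹,
   and splitting off a component containing an edge then gives κ(H,Δ) ≤ α + 2π(|H|⁻¹ - |H_C|⁻¹) ≤ α.
   So positive curvature forces Δ to be edgeless, and then κ = 2π|H|⁻¹ - Σ_v π|H_v|⁻¹ is positive
   only when H is finite and Δ is one orbit of vertices whose stabilizer has index 1. *)

Section GroupFacts.
Variable G : Group.

Lemma gmulVr (x : G) : gmul G x (ginv G x) = gone G.
Proof.
  rewrite <- (gmul1 G (gmul G x (ginv G x))), <- (gmulV G (ginv G x)) at 1.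
  rewrite <- gmulA, (gmulA G (ginv G x) x), gmulV, gmul1.
  apply gmulV.
Qed.

Lemma gmul1r (x : G) : gmul G x (gone G) = x.
Proof. rewrite <- (gmulV G x), gmulA, gmulVr. apply gmul1. Qed.

Lemma gmulKV (x y : G) : gmul G (ginv G x) (gmul G x y) = y.
Proof. rewrite gmulA, gmulV. apply gmul1. Qed.

Lemma gmul_cancel_l (x y z : G) : gmul G x y = gmul G x z -> y = z.
Proof. intros e. rewrite <- (gmulKV x y), e. apply gmulKV. Qed.

Lemma ginvK (x : G) : ginv G (ginv G x) = x.
Proof. apply (gmul_cancel_l (ginv G x)). rewrite gmulVr. symmetry. apply gmulV. Qed.

Lemma conj_gmulK (k h : G) :
  gmul G (ginv G k) (gmul G (gmul G k (gmul G h (ginv G k))) k) = h.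
Proof. rewrite <- gmulA, gmulKV, <- gmulA, gmulV. apply gmul1r. Qed.

End GroupFacts.

Definition dec (P : Prop) : bool := if excluded_middle_informative P then true else false.

Lemma dec_true (P : Prop) : dec P = true <-> P.
Proof. unfold dec; destruct excluded_middle_informative; split; congruence || tauto. Qed.

Lemma dec_false (P : Prop) : dec P = false <-> ~ P.
Proof. unfold dec; destruct excluded_middle_informative; split; congruence || tauto. Qed.

Section InvCard.
Context {T : Type}.
Implicit Types A B C : T -> Prop.

Lemma fin_enum_length A l1 l2 : fin_enum A l1 -> fin_enum A l2 -> length l1 = length l2.
Proof.
  intros [N1 H1] [N2 H2].
  apply Nat.le_antisymm; apply NoDup_incl_length; auto; intros x Hx;
    [apply H2, H1 | apply H1, H2]; auto.
Qed.

Lemma inv_card_fin_enum A l : fin_enum A l -> inv_card A = / INR (length l).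
Proof.
  intros Hl. unfold inv_card. destruct excluded_middle_informative as [Hfin|Hinf].
  - rewrite (fin_enum_length A _ l); auto. apply epsilon_spec; eauto.
  - exfalso; eauto.
Qed.

Lemma inv_card_infinite A : ~ (exists l, fin_enum A l) -> inv_card A = 0.
Proof. intros Hinf. unfold inv_card. destruct excluded_middle_informative; tauto. Qed.

Lemma inv_card_ge0 A : 0 <= inv_card A.
Proof.
  unfold inv_card. destruct excluded_middle_informative; [|lra].
  destruct (length _) as [|n].
  - simpl. rewrite Rinv_0. lra.
  - apply Rlt_le, Rinv_0_lt_compat, lt_0_INR. lia.
Qed.

Lemma fin_enum_nonempty A l x : fin_enum A l -> A x -> (0 < length l)%nat.
Proof. intros [_ Hl] Ax. apply Hl in Ax. destruct l; simpl in *; [contradiction | lia]. Qed.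

Lemma inv_card_gt0 A l x : fin_enum A l -> A x -> 0 < inv_card A.
Proof.
  intros Hl Ax. rewrite (inv_card_fin_enum A l Hl).
  apply Rinv_0_lt_compat, lt_0_INR. eapply fin_enum_nonempty; eauto.
Qed.

Lemma fin_enum_map A B (f g : T -> T) l :
  (forall x, A x -> B (f x)) -> (forall y, B y -> A (g y)) ->
  (forall x, A x -> g (f x) = x) -> (forall y, B y -> f (g y) = y) ->
  fin_enum A l -> fin_enum B (map f l).
Proof.
  intros hf hg gf fg [N Hl]. split.
  - apply NoDup_map_NoDup_ForallPairs; auto. intros a b ha hb e.
    rewrite <- (gf a), <- (gf b); try apply Hl; auto. congruence.
  - intros y; split.
    + intros hy. rewrite <- (fg y hy). apply in_map, Hl; auto.
    + intros hy. apply in_map_iff in hy as [x [<- hx]]. apply hf, Hl; auto.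
Qed.

Lemma inv_card_bij A B (f g : T -> T) :
  (forall x, A x -> B (f x)) -> (forall y, B y -> A (g y)) ->
  (forall x, A x -> g (f x) = x) -> (forall y, B y -> f (g y) = y) ->
  inv_card A = inv_card B.
Proof.
  intros hf hg gf fg.
  destruct (classic (exists l, fin_enum A l)) as [[l hl]|Hinf].
  - rewrite (inv_card_fin_enum A l hl), (inv_card_fin_enum B (map f l)), length_map; auto.
    eapply fin_enum_map; eauto.
  - rewrite !inv_card_infinite; auto.
    intros [l hl]. apply Hinf. exists (map g l). eapply fin_enum_map; eauto.
Qed.

Lemma inv_card_ext A B : (forall x, A x <-> B x) -> inv_card A = inv_card B.
Proof. intros AB. apply (inv_card_bij A B (fun x => x) (fun x => x)); firstorder. Qed.

Lemma fin_enum_filter A C l : (forall x, A x -> C x) -> fin_enum C l ->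
  fin_enum A (filter (fun x => dec (A x)) l).
Proof.
  intros AC [N Hl]. split; [apply NoDup_filter; auto |].
  intros x. rewrite filter_In, dec_true. firstorder.
Qed.

Lemma inv_card_le_subset A C : (forall x, A x -> C x) -> (exists x, A x) ->
  inv_card C <= inv_card A.
Proof.
  intros AC [a Aa].
  destruct (classic (exists l, fin_enum C l)) as [[l Hl]|Hinf].
  - pose proof (fin_enum_filter A C l AC Hl) as HA.
    rewrite (inv_card_fin_enum _ _ Hl), (inv_card_fin_enum _ _ HA).
    apply Rinv_le_contravar.
    + apply lt_0_INR. eapply fin_enum_nonempty; eauto.
    + apply le_INR, filter_length_le.
  - rewrite inv_card_infinite; auto. apply inv_card_ge0.
Qed.

Lemma inv_card_le_half A C (f : T -> T) :
  (forall x, A x -> C x) -> (forall x, A x -> C (f x)) -> (forall x, A x -> ~ A (f x)) ->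
  (forall x y, A x -> A y -> f x = f y -> x = y) -> (exists x, A x) ->
  2 * inv_card C <= inv_card A.
Proof.
  intros AC fAC fA finj [a Aa].
  destruct (classic (exists l, fin_enum C l)) as [[lc HC]|Hinf].
  - pose proof (fin_enum_filter A C lc AC HC) as HA. set (la := filter _ lc) in *.
    rewrite (inv_card_fin_enum _ _ HC), (inv_card_fin_enum _ _ HA).
    assert (Hpos : 0 < INR (length la)) by (apply lt_0_INR; eapply fin_enum_nonempty; eauto).
    destruct HA as [NA HA'], HC as [_ HC'].
    assert (Hlen : (length la + length la <= length lc)%nat).
    { rewrite <- (length_map f la) at 2. rewrite <- length_app. apply NoDup_incl_length.
      - apply NoDup_app; auto.
        + apply NoDup_map_NoDup_ForallPairs; auto.
          intros x y hx hy. apply finj; apply HA'; auto.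
        + intros x hx hx'. apply in_map_iff in hx' as [y [<- hy]].
          apply HA' in hx, hy. eapply fA; eauto.
      - intros x hx. apply HC'. apply in_app_or in hx as [hx|hx].
        + apply AC, HA'; auto.
        + apply in_map_iff in hx as [y [<- hy]]. apply fAC, HA'; auto. }
    apply le_INR in Hlen. rewrite plus_INR in Hlen.
    apply (Rmult_le_reg_r (INR (length lc) * INR (length la))); [nra|].
    field_simplify; lra.
  - rewrite (inv_card_infinite C); auto. rewrite Rmult_0_r. apply inv_card_ge0.
Qed.

End InvCard.

Section SumR.
Context {T : Type}.
Implicit Types (f g : T -> R) (l : list T).

Lemma sumR_perm f l1 l2 : Permutation l1 l2 -> sumR f l1 = sumR f l2.
Proof. induction 1; unfold sumR in *; simpl; lra. Qed.

Lemma sumR_eq_in f g l : (forall x, In x l -> f x = g x) -> sumR f l = sumR g l.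
Proof. unfold sumR. intros fg. f_equal. apply map_ext_in. auto. Qed.

Lemma sumR_map {U} (f : U -> R) (p : T -> U) l : sumR f (map p l) = sumR (fun x => f (p x)) l.
Proof. unfold sumR. rewrite map_map. reflexivity. Qed.

Lemma sumR_split f (P : T -> Prop) l :
  sumR f l = sumR f (filter (fun x => dec (P x)) l) + sumR f (filter (fun x => dec (~ P x)) l).
Proof.
  induction l as [|x l IH]; unfold sumR in *; simpl; [lra|].
  destruct (classic (P x)) as [Px|Px].
  - rewrite (proj2 (dec_true _) Px), (proj2 (dec_false (~ P x))) by tauto. simpl. lra.
  - rewrite (proj2 (dec_false _) Px), (proj2 (dec_true (~ P x))) by tauto. simpl. lra.
Qed.

Lemma sumR_ge0 f l : (forall x, In x l -> 0 <= f x) -> 0 <= sumR f l.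
Proof.
  unfold sumR. induction l as [|x l IH]; simpl; intros f0; [lra|].
  pose proof (f0 x (or_introl eq_refl)). pose proof (IH (fun y hy => f0 y (or_intror hy))). lra.
Qed.

End SumR.

Section Orbits.
Variables (G : Group) (T : Type) (act : G -> T -> T).
Hypothesis act1 : forall x, act (gone G) x = x.
Hypothesis actM : forall g h x, act (gmul G g h) x = act g (act h x).
Variable K : G -> Prop.
Hypothesis HK : subgroup G K.

Lemma act_ginvK k x : act (ginv G k) (act k x) = x.
Proof. rewrite <- actM, gmulV; auto. Qed.

Definition same_orbit x y := exists k, K k /\ act k x = y.

Lemma same_orbit_refl x : same_orbit x x.
Proof. exists (gone G). split; auto. apply HK. Qed.

Lemma same_orbit_sym x y : same_orbit x y -> same_orbit y x.
Proof. intros [k [Kk <-]]. exists (ginv G k). split; [apply HK; auto | apply act_ginvK]. Qed.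

Lemma same_orbit_trans x y z : same_orbit x y -> same_orbit y z -> same_orbit x z.
Proof. intros [k [Kk <-]] [k' [Kk' <-]]. exists (gmul G k' k). split; auto. apply HK; auto. Qed.

Lemma transversal_nil (D : T -> Prop) : (forall x, ~ D x) -> transversal act K D [].
Proof.
  intros nD. repeat split; try constructor; simpl; try tauto.
  intros x Dx. exfalso. eapply nD; eauto.
Qed.

Lemma transversal_single (D : T -> Prop) v : D v -> (forall x, D x -> x = v) ->
  transversal act K D [v].
Proof.
  intros Dv Dpt. split; [|split; [|split]].
  - constructor; [simpl; tauto | constructor].
  - intros x [<-|[]]; auto.
  - intros x Dx. exists v, (gone G). rewrite act1, (Dpt x Dx). repeat split; [left; auto | apply HK].
  - intros x y k [<-|[]] [<-|[]]; auto.
Qed.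

Lemma transversal_sumR_eq (D : T -> Prop) l1 l2 (f : T -> R) :
  transversal act K D l1 -> transversal act K D l2 ->
  (forall k x, K k -> D x -> f (act k x) = f x) ->
  sumR f l1 = sumR f l2.
Proof.
  intros [N1 [D1 [C1 U1]]] [N2 [D2 [C2 U2]]] finv.
  set (rep := fun x => epsilon (inhabits x) (fun y => In y l2 /\ same_orbit y x)).
  assert (Hrep : forall x, D x -> In (rep x) l2 /\ same_orbit (rep x) x).
  { intros x Dx. apply epsilon_spec. destruct (C2 x Dx) as [y [k [? [? ?]]]].
    exists y. split; auto. exists k; auto. }
  transitivity (sumR f (map rep l1)).
  - rewrite sumR_map. apply sumR_eq_in. intros x hx.
    destruct (Hrep x (D1 x hx)) as [_ [k [Kk e]]].
    rewrite <- e at 1. rewrite finv; auto. apply D2, Hrep, D1; auto.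
  - apply sumR_perm, NoDup_Permutation; auto.
    + apply NoDup_map_NoDup_ForallPairs; auto. intros a b ha hb e.
      destruct (Hrep a (D1 a ha)) as [_ oa], (Hrep b (D1 b hb)) as [_ ob].
      rewrite e in oa.
      destruct (same_orbit_trans _ _ _ (same_orbit_sym _ _ oa) ob) as [k [Kk ek]].
      eapply U1; eauto.
    + intros y; split.
      * intros hy. apply in_map_iff in hy as [x [<- hx]]. apply Hrep, D1; auto.
      * intros hy. destruct (C1 y (D2 y hy)) as [x [k [hx [Kk e]]]].
        apply in_map_iff. exists x. split; auto.
        destruct (Hrep x (D1 x hx)) as [hr o].
        destruct (same_orbit_trans _ _ _ o (ex_intro _ k (conj Kk e))) as [k' [Kk' e']].
        eapply U2; eauto.
Qed.

(* Greedy extraction from a finite cover: keep a point when its orbit is not yet represented. *)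
Lemma transversal_exists (D : T -> Prop) l :
  (forall k x, K k -> D x -> D (act k x)) ->
  (forall x, D x -> exists y k, In y l /\ K k /\ act k y = x) ->
  exists t, transversal act K D t.
Proof.
  intros Dinv Cov.
  assert (Hgreedy : exists t, NoDup t /\ (forall x, In x t -> D x) /\
     (forall x y, In x t -> In y t -> same_orbit x y -> x = y) /\
     (forall y, In y l -> D y -> exists z, In z t /\ same_orbit z y)).
  { clear Cov. induction l as [|y l [t [N [Dt [Ut Ct]]]]].
    - exists []. repeat split; simpl; try tauto. constructor.
    - destruct (classic (D y /\ ~ exists z, In z t /\ same_orbit z y)) as [[Dy new]|old].
      + exists (y :: t). repeat split.
        * constructor; auto. intros hy. apply new. exists y. split; auto. apply same_orbit_refl.
        * intros x [<-|hx]; auto.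
        * intros a b [<-|ha] [<-|hb] o; auto; exfalso; apply new.
          -- exists b. split; auto. apply same_orbit_sym; auto.
          -- exists a. split; auto.
        * intros z [<-|hz] Dz.
          -- exists y. split; [left; auto | apply same_orbit_refl].
          -- destruct (Ct z hz Dz) as [w [hw o]]. exists w. split; [right|]; auto.
      + exists t. repeat split; auto.
        intros z [<-|hz] Dz; auto. apply NNPP. intros nz. apply old. split; auto. }
  destruct Hgreedy as [t [N [Dt [Ut Ct]]]]. exists t. repeat split; auto.
  - intros x Dx. destruct (Cov x Dx) as [y [k [hy [Kk e]]]].
    assert (Dy : D y).
    { rewrite <- (act_ginvK k y), e. apply Dinv; auto. apply HK; auto. }
    destruct (Ct y hy Dy) as [z [hz [k' [Kk' e']]]].
    exists z, (gmul G k k'). repeat split; auto.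
    + apply HK; auto.
    + rewrite actM, e'; auto.
  - intros x y k hx hy Kk e. apply Ut; auto. exists k; auto.
Qed.

Lemma inv_card_stab_act k x : K k ->
  inv_card (fun h => K h /\ act h (act k x) = act k x) = inv_card (fun h => K h /\ act h x = x).
Proof.
  intros Kk. destruct HK as [K1 [KM KV]].
  symmetry. apply (inv_card_bij _ _ (fun h => gmul G k (gmul G h (ginv G k)))
                                    (fun h => gmul G (ginv G k) (gmul G h k))).
  - intros h [Kh e]. split; [apply KM; [|apply KM]; auto|].
    rewrite !actM, act_ginvK. congruence.
  - intros h [Kh e]. split; [apply KM; [|apply KM]; auto|].
    rewrite !actM, e. apply act_ginvK.
  - intros h _. apply conj_gmulK.
  - intros h _. pose proof (conj_gmulK G (ginv G k) h) as c. rewrite ginvK in c. exact c.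
Qed.

Lemma transversal_filter (D P : T -> Prop) l :
  transversal act K D l -> (forall k x, K k -> D x -> (P (act k x) <-> P x)) ->
  transversal act K (fun x => D x /\ P x) (filter (fun x => dec (P x)) l).
Proof.
  intros [N [Dl [Cl Ul]]] Pinv. split; [|split; [|split]].
  - apply NoDup_filter; auto.
  - intros x hx. apply filter_In in hx as [hx Px]. rewrite dec_true in Px. split; auto.
  - intros x [Dx Px]. destruct (Cl x Dx) as [y [k [hy [Kk e]]]].
    exists y, k. repeat split; auto. apply filter_In. split; auto.
    rewrite dec_true, <- (Pinv k); auto. congruence.
  - intros x y k hx hy. apply filter_In in hx as [hx _], hy as [hy _]. eapply Ul; eauto.
Qed.

(* The [K]-orbits of [D] correspond to the [K']-orbits of [Q]; [K'] plays the role of the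
   stabilizer of [Q]. *)
Lemma transversal_restrict (D Q : T -> Prop) (K' : G -> Prop) l :
  transversal act K D l ->
  (forall x, Q x -> D x) ->
  (forall x, D x -> exists k, K k /\ Q (act k x)) ->
  (forall h, K' h -> K h) ->
  (forall h a, K h -> Q a -> Q (act h a) -> K' h) ->
  (forall h a, K' h -> Q a -> Q (act h a)) ->
  exists l', transversal act K' Q l' /\
    forall f : T -> R, (forall k x, K k -> D x -> f (act k x) = f x) -> sumR f l = sumR f l'.
Proof.
  intros [N [Dl [Cl Ul]]] QD Qmeets K'K K'crit K'Q.
  set (push := fun x => act (epsilon (inhabits (gone G)) (fun k => K k /\ Q (act k x))) x).
  assert (Hpush : forall x, D x -> exists k, K k /\ Q (act k x) /\ push x = act k x).
  { intros x Dx. unfold push. set (k := epsilon _ _).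
    assert (K k /\ Q (act k x)) as [] by (apply epsilon_spec; auto). exists k; auto. }
  assert (Hinj : forall a b k, In a l -> In b l -> K k -> act k (push a) = push b -> a = b).
  { intros a b k ha hb Kk e.
    destruct (Hpush a (Dl a ha)) as [ka [Kka [_ ea]]], (Hpush b (Dl b hb)) as [kb [Kkb [_ eb]]].
    apply (Ul a b (gmul G (ginv G kb) (gmul G k ka))); auto.
    - apply HK; [apply HK; auto | apply HK; auto].
    - rewrite actM, actM, <- ea, e, eb. apply act_ginvK. }
  exists (map push l). split; [split; [|split; [|split]]|].
  - apply NoDup_map_NoDup_ForallPairs; auto.
    intros a b ha hb e. apply (Hinj a b (gone G)); auto; [apply HK | rewrite act1; auto].
  - intros x hx. apply in_map_iff in hx as [y [<- hy]].
    destruct (Hpush y (Dl y hy)) as [k [Kk [Qy e]]]. rewrite e. auto.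
  - intros x Qx. destruct (Cl x (QD x Qx)) as [y [k [hy [Kk e]]]].
    destruct (Hpush y (Dl y hy)) as [k' [Kk' [Qy e']]].
    assert (E : act (gmul G k (ginv G k')) (push y) = x) by (rewrite e', actM, act_ginvK; auto).
    exists (push y), (gmul G k (ginv G k')). repeat split; auto.
    + apply in_map; auto.
    + apply (K'crit _ (push y)); [apply HK; [|apply HK]; auto | rewrite e'; auto | rewrite E; auto].
  - intros x y k hx hy K'k e.
    apply in_map_iff in hx as [a [<- ha]], hy as [b [<- hb]].
    f_equal. eapply Hinj; eauto.
  - intros f finv. rewrite sumR_map. apply sumR_eq_in. intros x hx.
    destruct (Hpush x (Dl x hx)) as [k [Kk [_ e]]]. rewrite e, finv; auto.
Qed.

End Orbits.

Section KappaTransversal.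
Variables (G : Group) (Γ : angled_graph G).

Definition vertex_sum (K : G -> Prop) (l : list (V Γ)) : R :=
  sumR (fun v => PI * inv_card (stabV Γ K v)) l.
Definition edge_sum (K : G -> Prop) (l : list (E Γ)) : R :=
  sumR (fun e => (PI - angle Γ e) * inv_card (stabE Γ K e)) l.

Lemma vertex_sum_cons K v l :
  vertex_sum K (v :: l) = PI * inv_card (stabV Γ K v) + vertex_sum K l.
Proof. reflexivity. Qed.

Lemma kappa_transversal K DV DE lv le : subgroup G K ->
  transversal (actV Γ) K DV lv -> transversal (actE Γ) K DE le ->
  kappa Γ K DV DE = 2 * PI * inv_card K - vertex_sum K lv + edge_sum K le.
Proof.
  intros HK tv te. unfold kappa. cbv zeta.
  set (reps := epsilon _ _).
  assert (Hr : transversal (actV Γ) K DV (fst reps) /\ transversal (actE Γ) K DE (snd reps)).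
  { apply epsilon_spec. exists (lv, le); auto. }
  destruct Hr as [rv re]. unfold vertex_sum, edge_sum.
  rewrite (transversal_sumR_eq G _ (actV Γ) (actV1 _ Γ) (actVM _ Γ) K HK DV (fst reps) lv),
          (transversal_sumR_eq G _ (actE Γ) (actE1 _ Γ) (actEM _ Γ) K HK DE (snd reps) le); auto.
  - intros k e Kk _. rewrite angle_inv. unfold stabE.
    rewrite (inv_card_stab_act G _ (actE Γ) (actE1 _ Γ) (actEM _ Γ) K HK k e); auto.
  - intros k v Kk _. unfold stabV.
    rewrite (inv_card_stab_act G _ (actV Γ) (actV1 _ Γ) (actVM _ Γ) K HK k v); auto.
Qed.

End KappaTransversal.

Arguments vertex_sum {G}. Arguments edge_sum {G}.

Definition linked {G} (Γ : angled_graph G) (DE : E Γ -> Prop) : relation (V Γ) :=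
  clos_refl_trans (V Γ) (adj Γ DE).

Section Linked.
Context {G : Group} (Γ : angled_graph G).
Variable DE : E Γ -> Prop.

Lemma adj_sym a b : adj Γ DE a b -> adj Γ DE b a.
Proof. intros [e [de o]]. exists e. split; auto. tauto. Qed.

Lemma linked_sym a b : linked Γ DE a b -> linked Γ DE b a.
Proof.
  induction 1; [apply rt_step, adj_sym; auto | apply rt_refl | eapply rt_trans; eauto].
Qed.

Lemma linked_edge e : DE e -> linked Γ DE (src Γ e) (tgt Γ e).
Proof. intros de. apply rt_step. exists e. auto. Qed.

Lemma linked_endpt e b : DE e -> linked Γ DE (src Γ e) (endpt Γ e b).
Proof. intros de. destruct b; [apply rt_refl | apply linked_edge; auto]. Qed.

Lemma linked_act k a b : (forall e, DE e -> DE (actE Γ k e)) ->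
  linked Γ DE a b -> linked Γ DE (actV Γ k a) (actV Γ k b).
Proof.
  intros DEk. induction 1 as [a b [e [de o]]| |]; [|apply rt_refl | eapply rt_trans; eauto].
  apply rt_step. exists (actE Γ k e). split; auto.
  destruct (act_incid _ Γ k e) as [[e1 e2]|[e1 e2]]; rewrite e1, e2;
    destruct o as [[<- <-]|[<- <-]]; auto.
Qed.

Lemma linked_act_src k e : (forall e, DE e -> DE (actE Γ k e)) -> DE e ->
  linked Γ DE (actV Γ k (src Γ e)) (src Γ (actE Γ k e)).
Proof.
  intros DEk de. destruct (act_incid _ Γ k e) as [[e1 _]|[e1 _]]; rewrite e1.
  - apply rt_refl.
  - apply linked_act; auto. apply linked_edge; auto.
Qed.

End Linked.

Section Components.
Variables (G : Group) (Γ : angled_graph G) (H : G -> Prop).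
Hypothesis HH : subgroup G H.
Variables (DV : V Γ -> Prop) (DE : E Γ -> Prop).
Hypothesis Hsec : section Γ H DV DE.

Let DV_act k v : H k -> DV v -> DV (actV Γ k v).
Proof. intros. apply Hsec; auto. Qed.
Let DE_act k e : H k -> DE e -> DE (actE Γ k e).
Proof. intros. apply Hsec; auto. Qed.
Let Hlinked_act k a b : H k -> linked Γ DE a b -> linked Γ DE (actV Γ k a) (actV Γ k b).
Proof. intros Hk. apply linked_act. intros e. apply DE_act; auto. Qed.
Let Hlinked_act_src k e : H k -> DE e -> linked Γ DE (actV Γ k (src Γ e)) (src Γ (actE Γ k e)).
Proof. intros Hk. apply linked_act_src. intros e'. apply DE_act; auto. Qed.
Let actV_ginvK := act_ginvK G _ (actV Γ) (actV1 _ Γ) (actVM _ Γ).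

Lemma vertex_transversal_exists : exists lv, transversal (actV Γ) H DV lv.
Proof.
  destruct Hsec as [_ [_ [[l hl] _]]].
  eapply (transversal_exists G _ (actV Γ) (actV1 _ Γ) (actVM _ Γ) H HH DV l); eauto.
Qed.

Lemma edge_transversal_exists : exists le, transversal (actE Γ) H DE le.
Proof.
  destruct Hsec as [_ [_ [_ [l hl]]]].
  eapply (transversal_exists G _ (actE Γ) (actE1 _ Γ) (actEM _ Γ) H HH DE l); eauto.
Qed.

Variable u : V Γ.

(* [comp_V], [comp_E] form the component C of [u] and [comp_stab] is its stabilizer H_C; [rest_V],
   [rest_E] form Δ', the complement of the H-orbit of C. *)
Definition comp_V w := DV w /\ linked Γ DE u w.
Definition comp_E e := DE e /\ linked Γ DE u (src Γ e).
Definition comp_stab h := H h /\ linked Γ DE u (actV Γ h u).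

Definition reaches w := exists h, H h /\ linked Γ DE u (actV Γ h w).
Definition rest_V w := DV w /\ ~ reaches w.
Definition rest_E e := DE e /\ ~ reaches (src Γ e).

Lemma comp_stab_subgroup : subgroup G comp_stab.
Proof.
  destruct HH as [H1 [HM HV]]. split; [|split].
  - split; auto. rewrite actV1. apply rt_refl.
  - intros x y [Hx lx] [Hy ly]. split; auto.
    rewrite actVM. eapply rt_trans; [apply lx | apply Hlinked_act; auto].
  - intros x [Hx lx]. split; auto. apply linked_sym.
    rewrite <- (actV_ginvK x u) at 2. apply Hlinked_act; auto.
Qed.

Lemma comp_stab_of_vertex h a :
  H h -> linked Γ DE u a -> linked Γ DE u (actV Γ h a) -> comp_stab h.
Proof.
  intros Hh la lha. split; auto. eapply rt_trans; [apply lha|].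
  apply linked_sym, Hlinked_act; auto.
Qed.

Lemma comp_stab_of_edge h e : H h -> comp_E e -> comp_E (actE Γ h e) -> comp_stab h.
Proof.
  intros Hh [de le] [_ lhe]. apply (comp_stab_of_vertex h (src Γ e)); auto.
  eapply rt_trans; [apply lhe | apply linked_sym, Hlinked_act_src; auto].
Qed.

Lemma comp_V_act h v : comp_stab h -> comp_V v -> comp_V (actV Γ h v).
Proof.
  intros [Hh lh] [dv lv]. split; auto. eapply rt_trans; [apply lh | apply Hlinked_act; auto].
Qed.

Lemma comp_E_act h e : comp_stab h -> comp_E e -> comp_E (actE Γ h e).
Proof.
  intros [Hh lh] [de le]. split; auto.
  eapply rt_trans; [apply lh | eapply rt_trans];
    [apply Hlinked_act; eauto | apply Hlinked_act_src; auto].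
Qed.

Lemma reaches_linked a b : linked Γ DE a b -> reaches a -> reaches b.
Proof.
  intros lab [h [Hh lh]]. exists h. split; auto. eapply rt_trans; [apply lh | apply Hlinked_act; auto].
Qed.

Lemma reaches_act k w : H k -> (reaches (actV Γ k w) <-> reaches w).
Proof.
  destruct HH as [_ [HM HV]]. intros Hk. split.
  - intros [h [Hh lh]]. exists (gmul G h k). rewrite actVM. auto.
  - intros [h [Hh lh]]. exists (gmul G h (ginv G k)). rewrite actVM, actV_ginvK. auto.
Qed.

Lemma reaches_act_src k e : H k -> DE e -> (reaches (src Γ (actE Γ k e)) <-> reaches (src Γ e)).
Proof.
  intros Hk de. rewrite <- (reaches_act k (src Γ e)); auto.
  pose proof (Hlinked_act_src k e Hk de).
  split; apply reaches_linked; auto. apply linked_sym; auto.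
Qed.

Lemma vertex_transversal_split lv : transversal (actV Γ) H DV lv ->
  transversal (actV Γ) H rest_V (filter (fun x => dec (~ reaches x)) lv) /\
  exists lc, transversal (actV Γ) comp_stab comp_V lc /\
    vertex_sum Γ H lv =
      vertex_sum Γ comp_stab lc + vertex_sum Γ H (filter (fun x => dec (~ reaches x)) lv).
Proof.
  intros tv.
  split; [apply (transversal_filter G _ (actV Γ) H DV (fun w => ~ reaches w)); auto;
          intros k w Hk _; rewrite reaches_act; tauto|].
  destruct (transversal_restrict G _ (actV Γ) (actV1 _ Γ) (actVM _ Γ) H HH
              (fun w => DV w /\ reaches w) comp_V comp_stab _
              (transversal_filter G _ (actV Γ) H DV reaches lv tv
                 (fun k w Hk _ => reaches_act k w Hk))) as [lc [tc Hsum]].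
  - intros w [dv lw]. split; auto. exists (gone G). split; [apply HH | rewrite actV1; auto].
  - intros w [dv [h [Hh lh]]]. exists h. repeat split; auto.
  - intros h [Hh _]; auto.
  - intros h a Hh [_ la] [_ lha]. apply (comp_stab_of_vertex h a); auto.
  - intros h a Hh Qa. apply comp_V_act; auto.
  - exists lc. split; auto. unfold vertex_sum. rewrite (sumR_split _ reaches lv). f_equal.
    rewrite Hsum.
    + apply sumR_eq_in. intros w hw. f_equal. apply inv_card_ext. intros h. unfold stabV.
      destruct tc as [_ [Dc _]]. destruct (Dc w hw) as [dw lw].
      split; [intros [Hh e]; split; auto; apply (comp_stab_of_vertex h w); auto; rewrite e; auto|].
      intros [[Hh _] e]; auto.
    + intros k w Hk _. unfold stabV.
      rewrite (inv_card_stab_act G _ (actV Γ) (actV1 _ Γ) (actVM _ Γ) H HH k w); auto.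
Qed.

Lemma edge_transversal_split le : transversal (actE Γ) H DE le ->
  transversal (actE Γ) H rest_E (filter (fun x => dec (~ reaches (src Γ x))) le) /\
  exists lc, transversal (actE Γ) comp_stab comp_E lc /\
    edge_sum Γ H le =
      edge_sum Γ comp_stab lc + edge_sum Γ H (filter (fun x => dec (~ reaches (src Γ x))) le).
Proof.
  intros te.
  split; [apply (transversal_filter G _ (actE Γ) H DE (fun e => ~ reaches (src Γ e))); auto;
          intros k e Hk de; rewrite reaches_act_src; tauto|].
  destruct (transversal_restrict G _ (actE Γ) (actE1 _ Γ) (actEM _ Γ) H HH
              (fun e => DE e /\ reaches (src Γ e)) comp_E comp_stab _
              (transversal_filter G _ (actE Γ) H DE (fun e => reaches (src Γ e)) le te
                 (fun k e Hk de => reaches_act_src k e Hk de))) as [lc [tc Hsum]].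
  - intros e [de le']. split; auto. exists (gone G). split; [apply HH | rewrite actV1; auto].
  - intros e [de [h [Hh lh]]]. exists h. repeat split; auto.
    eapply rt_trans; [apply lh | apply Hlinked_act_src; auto].
  - intros h [Hh _]; auto.
  - intros h e Hh Qe Qhe. apply (comp_stab_of_edge h e); auto.
  - intros h e Hh Qe. apply comp_E_act; auto.
  - exists lc. split; auto. unfold edge_sum.
    rewrite (sumR_split _ (fun e => reaches (src Γ e)) le). f_equal.
    rewrite Hsum.
    + apply sumR_eq_in. intros e he. f_equal. apply inv_card_ext. intros h. unfold stabE.
      destruct tc as [_ [Dc _]].
      split; [intros [Hh e']; split; auto; apply (comp_stab_of_edge h e); auto; rewrite e'; auto|].
      intros [[Hh _] e']; auto.
    + intros k e Hk _. rewrite angle_inv. unfold stabE.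
      rewrite (inv_card_stab_act G _ (actE Γ) (actE1 _ Γ) (actEM _ Γ) H HH k e); auto.
Qed.

Lemma kappa_split :
  kappa Γ H DV DE - 2 * PI * inv_card H =
  (kappa Γ comp_stab comp_V comp_E - 2 * PI * inv_card comp_stab) +
  (kappa Γ H rest_V rest_E - 2 * PI * inv_card H).
Proof.
  destruct vertex_transversal_exists as [lv tv], edge_transversal_exists as [le te].
  destruct (vertex_transversal_split lv tv) as [trv [lcv [tcv ev]]].
  destruct (edge_transversal_split le te) as [tre [lce [tce ee]]].
  rewrite (kappa_transversal G Γ H DV DE lv le),
    (kappa_transversal G Γ comp_stab comp_V comp_E lcv lce),
    (kappa_transversal G Γ H rest_V rest_E _ _ HH trv tre), ev, ee; auto.
  - ring.
  - apply comp_stab_subgroup.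
Qed.

Lemma comp_section : section Γ comp_stab comp_V comp_E.
Proof.
  destruct Hsec as [Hsub _]. split; [|split; [split|split]].
  - intros e [de le]. destruct (Hsub e de). split; split; auto.
    eapply rt_trans; [apply le | apply linked_edge; auto].
  - intros h v. apply comp_V_act.
  - intros h e. apply comp_E_act.
  - destruct vertex_transversal_exists as [lv tv].
    destruct (vertex_transversal_split lv tv) as [_ [lc [[_ [_ [Cc _]]] _]]]. eauto.
  - destruct edge_transversal_exists as [le te].
    destruct (edge_transversal_split le te) as [_ [lc [[_ [_ [Cc _]]] _]]]. eauto.
Qed.

Lemma rest_section : section Γ H rest_V rest_E.
Proof.
  destruct Hsec as [Hsub _]. split; [|split; [split|split]].
  - intros e [de nr]. destruct (Hsub e de). split; split; auto.
    intros r. apply nr. apply (reaches_linked (tgt Γ e)); auto. apply linked_sym, linked_edge; auto.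
  - intros k v Hk [dv nr]. split; auto. rewrite reaches_act; auto.
  - intros k e Hk [de nr]. split; auto. rewrite reaches_act_src; auto.
  - destruct vertex_transversal_exists as [lv tv].
    destruct (vertex_transversal_split lv tv) as [[_ [_ [Cr _]]] _]. eauto.
  - destruct edge_transversal_exists as [le te].
    destruct (edge_transversal_split le te) as [[_ [_ [Cr _]]] _]. eauto.
Qed.

Hypothesis Hsp : spurless Γ DV DE.

Lemma comp_spurless : spurless Γ comp_V comp_E.
Proof.
  intros v [dv lv] [e [b [ce [eb Uniq]]]]. apply (Hsp v dv). exists e, b.
  split; [apply ce|split; auto]. intros e' b' de' eb'. apply Uniq; auto. split; auto.
  eapply rt_trans; [apply lv|]. rewrite <- eb'. apply linked_sym, linked_endpt; auto.
Qed.

Lemma rest_spurless : spurless Γ rest_V rest_E.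
Proof.
  intros v [dv nr] [e [b [re [eb Uniq]]]]. apply (Hsp v dv). exists e, b.
  split; [apply re|split; auto]. intros e' b' de' eb'. apply Uniq; auto. split; auto.
  intros r. apply nr. rewrite <- eb'. apply (reaches_linked (src Γ e')); auto. apply linked_endpt; auto.
Qed.

Lemma linked_comp a b : linked Γ DE a b -> linked Γ DE u a -> linked Γ comp_E a b.
Proof.
  induction 1 as [x y [e [de o]]| x | x y z lxy IH1 lyz IH2]; intros lu.
  - apply rt_step. exists e. repeat split; auto.
    destruct o as [[<- <-]|[<- <-]]; auto.
    eapply rt_trans; [apply lu | apply linked_sym, linked_edge; auto].
  - apply rt_refl.
  - eapply rt_trans; [apply IH1; auto | apply IH2; eapply rt_trans; eauto].
Qed.

Lemma comp_connected : connected Γ comp_V comp_E.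
Proof.
  intros a b [_ la] [_ lb]. eapply rt_trans.
  - apply linked_sym, linked_comp; [apply la | apply rt_refl].
  - apply linked_comp; [apply lb | apply rt_refl].
Qed.

Lemma comp_edgeless_point : (forall e, ~ comp_E e) -> forall w, comp_V w -> w = u.
Proof.
  intros ne w [_ lw]. apply clos_rt_rt1n in lw. destruct lw as [|y z [e [de o]] _]; auto.
  exfalso. apply (ne e). split; auto.
  destruct o as [[-> _]|[_ <-]]; [apply rt_refl | apply linked_sym, linked_edge; auto].
Qed.

End Components.

Section Edgeless.
Variables (G : Group) (Γ : angled_graph G) (H : G -> Prop).
Hypothesis HH : subgroup G H.

Lemma kappa_edgeless DV DE lv : (forall e, ~ DE e) -> transversal (actV Γ) H DV lv ->
  kappa Γ H DV DE = 2 * PI * inv_card H - vertex_sum Γ H lv.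
Proof.
  intros ne tv. rewrite (kappa_transversal G Γ H DV DE lv []); auto.
  - unfold edge_sum, sumR. simpl. ring.
  - apply transversal_nil. exact ne.
Qed.

Lemma kappa_empty DV DE : subgraph Γ DV DE -> transversal (actV Γ) H DV [] ->
  kappa Γ H DV DE = 2 * PI * inv_card H.
Proof.
  intros Hsub tv.
  assert (nv : forall v, ~ DV v).
  { intros v dv. destruct tv as [_ [_ [Cl _]]]. destruct (Cl v dv) as [y [k [[] _]]]. }
  rewrite (kappa_edgeless DV DE []); auto.
  - unfold vertex_sum, sumR. simpl. ring.
  - intros e de. apply (nv (src Γ e)), Hsub, de.
Qed.

Lemma inv_card_le_stabV v : PI * inv_card H <= PI * inv_card (stabV Γ H v).
Proof.
  apply Rmult_le_compat_l; [pose proof PI_RGT_0; lra|].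
  apply inv_card_le_subset; [intros h [Hh _]; auto|].
  exists (gone G). split; [apply HH | apply actV1].
Qed.

Lemma vertex_sum_ge0 l : 0 <= vertex_sum Γ H l.
Proof.
  apply sumR_ge0. intros v _. pose proof PI_RGT_0. pose proof (inv_card_ge0 (stabV Γ H v)). nra.
Qed.

Lemma kappa_point DV DE v : DV v -> (forall w, DV w -> w = v) -> (forall e, ~ DE e) ->
  invariant Γ H DV DE ->
  kappa Γ H DV DE = PI * inv_card H.
Proof.
  intros dv pt ne [DVinv _].
  rewrite (kappa_edgeless DV DE [v]); auto.
  - unfold vertex_sum, sumR. simpl.
    rewrite (inv_card_ext (stabV Γ H v) H); [ring|].
    intros h. unfold stabV. split; [tauto|]. intros Hh. split; auto.
  - apply transversal_single; auto. apply actV1.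
Qed.

Lemma kappa_edgeless_pos DV DE : section Γ H DV DE -> (exists v, DV v) -> (forall e, ~ DE e) ->
  0 < kappa Γ H DV DE ->
  (exists v, DV v /\ forall w, DV w -> w = v) /\ group_finite G H.
Proof.
  intros Hsec [v0 dv0] ne pos. pose proof PI_RGT_0.
  destruct (vertex_transversal_exists G Γ H HH DV DE Hsec) as [lv tv].
  rewrite (kappa_edgeless DV DE lv ne tv) in pos.
  assert (fin : group_finite G H).
  { apply NNPP. intros nf. rewrite (inv_card_infinite H nf) in pos.
    pose proof (vertex_sum_ge0 lv). lra. }
  split; auto.
  destruct tv as [_ [Dl [Cl _]]].
  destruct lv as [|a [|b rest]].
  - destruct (Cl v0 dv0) as [y [k [[] _]]].
  - exists a. split; [apply Dl; left; auto|].
    intros w dw. apply NNPP. intros nw.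
    (* a second point [k a] of the orbit puts the coset [k H_a] outside [H_a] *)
    destruct (Cl w dw) as [y [k [[<-|[]] [Hk e]]]].
    assert (2 * inv_card H <= inv_card (stabV Γ H a)).
    { apply (inv_card_le_half _ _ (gmul G k)).
      - intros h [Hh _]; auto.
      - intros h [Hh _]. apply HH; auto.
      - intros h [Hh eh] [_ ekh]. apply nw. rewrite <- e. rewrite actVM, eh in ekh. exact ekh.
      - intros h h' _ _. apply gmul_cancel_l.
      - exists (gone G). split; [apply HH | apply actV1]. }
    rewrite vertex_sum_cons in pos. pose proof (vertex_sum_ge0 []). nra.
  - exfalso. rewrite !vertex_sum_cons in pos.
    pose proof (vertex_sum_ge0 rest).
    pose proof (inv_card_le_stabV a). pose proof (inv_card_le_stabV b). lra.
Qed.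

End Edgeless.

Section CurvatureBound.
Variables (G : Group) (Γ : angled_graph G) (α : R).
Hypothesis Hα : α <= 0.
Hypothesis Hcurv : forall K : G -> Prop, subgroup G K ->
  forall (DV : V Γ -> Prop) (DE : E Γ -> Prop), regular_section Γ K DV DE -> kappa Γ K DV DE <= α.
Variable H : G -> Prop.
Hypothesis HH : subgroup G H.

Lemma kappa_comp_regular DV DE u : section Γ H DV DE -> spurless Γ DV DE ->
  (exists e, comp_E G Γ DE u e) ->
  kappa Γ (comp_stab G Γ H DE u) (comp_V G Γ DV DE u) (comp_E G Γ DE u) <= α.
Proof.
  intros Hsec Hsp he. apply Hcurv; [apply (comp_stab_subgroup G Γ H HH DV DE Hsec)|].
  split; [apply comp_section | split; [apply comp_spurless | split; [apply comp_connected | exact he]]];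
    auto.
Qed.

(* A component without edges is the single vertex [u], whose term is [- PI |H_u|^-1]. *)
Lemma kappa_comp_le DV DE u : section Γ H DV DE -> spurless Γ DV DE -> DV u ->
  kappa Γ (comp_stab G Γ H DE u) (comp_V G Γ DV DE u) (comp_E G Γ DE u)
    <= 2 * PI * inv_card (comp_stab G Γ H DE u).
Proof.
  intros Hsec Hsp du.
  pose proof (comp_stab_subgroup G Γ H HH DV DE Hsec u) as HHu.
  pose proof (inv_card_ge0 (comp_stab G Γ H DE u)). pose proof PI_RGT_0.
  destruct (classic (exists e, comp_E G Γ DE u e)) as [he|ne].
  - pose proof (kappa_comp_regular DV DE u Hsec Hsp he). nra.
  - assert (pt : forall w, comp_V G Γ DV DE u w -> w = u).
    { apply comp_edgeless_point. intros e he. apply ne. eauto. }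
    rewrite (kappa_edgeless G Γ _ HHu _ _ [u]).
    + rewrite vertex_sum_cons. pose proof (vertex_sum_ge0 G Γ (comp_stab G Γ H DE u) []).
      pose proof (inv_card_ge0 (stabV Γ (comp_stab G Γ H DE u) u)). nra.
    + intros e he. apply ne. eauto.
    + apply transversal_single; [apply actV1 | apply HHu | split; auto; apply rt_refl | exact pt].
Qed.

Lemma kappa_spurless_le n : forall DV DE lv,
  section Γ H DV DE -> spurless Γ DV DE ->
  transversal (actV Γ) H DV lv -> (length lv <= n)%nat ->
  kappa Γ H DV DE <= 2 * PI * inv_card H.
Proof.
  induction n as [|n IH]; intros DV DE [|u rest] Hsec Hsp tv hl; simpl in hl.
  1,3: rewrite kappa_empty; [lra | apply HH | apply Hsec | exact tv].
  1: lia.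
  assert (du : DV u) by (apply tv; left; auto).
  pose proof (kappa_split G Γ H HH DV DE Hsec u) as Hsplit.
  pose proof (kappa_comp_le DV DE u Hsec Hsp du).
  destruct (vertex_transversal_split G Γ H HH DV DE Hsec u _ tv) as [trest _].
  assert (kappa Γ H (rest_V G Γ H DV DE u) (rest_E G Γ H DE u) <= 2 * PI * inv_card H).
  { eapply IH; [apply rest_section | apply rest_spurless | apply trest |]; auto.
    (* [u] reaches itself, so its orbit is dropped *)
    simpl. rewrite (proj2 (dec_false _)).
    - simpl. pose proof (filter_length_le (fun x => dec (~ reaches G Γ H DE u x)) rest). lia.
    - intros nr. apply nr. exists (gone G). split; [apply HH | rewrite actV1; apply rt_refl]. }
  lra.
Qed.

Lemma kappa_le_alpha DV DE : section Γ H DV DE -> spurless Γ DV DE -> (exists e, DE e) ->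
  kappa Γ H DV DE <= α.
Proof.
  intros Hsec Hsp [e de]. set (u := src Γ e).
  assert (du : DV u) by apply (proj1 Hsec e de).
  pose proof (kappa_split G Γ H HH DV DE Hsec u) as Hsplit.
  assert (kappa Γ (comp_stab G Γ H DE u) (comp_V G Γ DV DE u) (comp_E G Γ DE u) <= α).
  { apply kappa_comp_regular; auto. exists e. split; auto. apply rt_refl. }
  destruct (vertex_transversal_exists G Γ H HH _ _ (rest_section G Γ H HH DV DE Hsec u)) as [l tl].
  pose proof (kappa_spurless_le (length l) _ _ l (rest_section G Γ H HH DV DE Hsec u)
                (rest_spurless G Γ H DV DE Hsec u Hsp) tl (le_n _)).
  assert (inv_card H <= inv_card (comp_stab G Γ H DE u)).
  { apply inv_card_le_subset; [intros h [Hh _]; auto|].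
    exists (gone G). apply (comp_stab_subgroup G Γ H HH DV DE Hsec u). }
  pose proof PI_RGT_0. nra.
Qed.

End CurvatureBound.

Theorem proposition7p2 (G : Group) (Γ : angled_graph G) (α : R) (Hα : α <= 0)
  (Hcurv : forall K : G -> Prop, subgroup G K ->
     forall (DV : V Γ -> Prop) (DE : E Γ -> Prop),
       regular_section Γ K DV DE -> kappa Γ K DV DE <= α)
  (H : G -> Prop) (HH : subgroup G H)
  (DV : V Γ -> Prop) (DE : E Γ -> Prop)
  (Hsec : section Γ H DV DE) (Hne : exists v, DV v) (Hsp : spurless Γ DV DE) :
  ((exists e, DE e) -> kappa Γ H DV DE <= α) /\
  (0 < kappa Γ H DV DE <->
     ((exists v, DV v /\ forall w, DV w -> w = v) /\ (forall e, ~ DE e) /\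
      group_finite G H)).
Proof.
  pose proof (kappa_le_alpha G Γ α Hα Hcurv H HH DV DE Hsec Hsp) as Hbound.
  split; [exact Hbound | split].
  - intros pos.
    assert (ne : forall e, ~ DE e).
    { intros e de. pose proof (Hbound (ex_intro _ e de)). lra. }
    destruct (kappa_edgeless_pos G Γ H HH DV DE Hsec Hne ne pos) as [pt fin]. auto.
  - intros [[v [dv pt]] [ne [l Hl]]].
    rewrite (kappa_point G Γ H HH DV DE v dv pt ne (proj1 (proj2 Hsec))).
    pose proof PI_RGT_0. pose proof (inv_card_gt0 H l (gone G) Hl (proj1 HH)). nra.
Qed.
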